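(* Let $G=(V,E)$ be the king grid and let $S\subset V$ be a locating-paired-dominating set of $G$. Fix any perfect matching $M$ of the induced subgraph $G[S]$, and for $v\in S$ let $m(v)$ denote the partner of $v$ in $M$. Define $S_1=\{v\in S : |N(v)\cap N(m(v))|=2\}$ and $S_2=\{v\in S : |N(v)\cap N(m(v))|=4\}$. Then $$\frac{14}{3}D(S_1)+\frac{9}{2}D(S_2)\ge 1.$$
   Context: The king grid is the infinite graph with vertex set $\mathbb{Z}\times\mathbb{Z}$ in which two distinct vertices are adjacent iff their Euclidean distance is at most $\sqrt2$. $N(v)$ is the open neighborhood of $v$ and $N[v]=N(v)\cup\{v\}$. A set $S\subset V$ is a locating-paired-dominating set (LPDS) if (i) every vertex $v\in V$ satisfies $N[v]\cap S\neq\emptyset$, (ii) the induced subgraph $G[S]$ has a perfect matching, and (iii) for any two distinct vertices $u,v\in V\setminus S$, $N(u)\cap S\neq N(v)\cap S$. For $k\ge 0$ and $u\in V$, $N^k[u]=\{x\in V: d(u,x)\le k\}$, where $d$ is graph distance. The density of a set $A\subset V$ is $D(A)=\limsup_{k\to\infty}\frac{|A\cap N^k[u]|}{|N^k[u]|}$ (independent of the choice of $u$). Note $S_1$ consists of vertices whose partner is at Euclidean distance $\sqrt2$ and $S_2$ of those whose partner is at distance $1$; $S=S_1\cup S_2$ disjointly. *)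

From Stdlib Require Import Reals ZArith List Classical ClassicalEpsilon.
From Coquelicot Require Import Coquelicot.
Open Scope R_scope.

Definition V := (Z * Z)%type.

Definition adj (a b : V) : Prop :=
  a <> b /\ ((fst a - fst b) * (fst a - fst b) + (snd a - snd b) * (snd a - snd b) <= 2)%Z.

Fixpoint dist_le (k : nat) (u x : V) : Prop :=
  match k with
  | O => u = x
  | S k' => dist_le k' u x \/ exists y, dist_le k' u y /\ adj y x
  end.

Definition ind (P : Prop) : nat :=
  if excluded_middle_informative P then 1%nat else 0%nat.

Definition count_box (c : V) (r : nat) (P : V -> Prop) : nat :=
  fold_right Nat.add 0%nat
    (map (fun i =>
       fold_right Nat.add 0%nat
         (map (fun j =>
            ind (P (fst c - Z.of_nat r + Z.of_nat i, snd c - Z.of_nat r + Z.of_nat j)%Z))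
            (seq 0 (2 * r + 1))))
       (seq 0 (2 * r + 1))).

(* |A ∩ N^k[u]|: every vertex at graph distance <= k from u lies in the
   box of radius k around u (each edge changes each coordinate by <= 1),
   so counting over that box counts the whole set. *)
Definition card_in_ball (A : V -> Prop) (u : V) (k : nat) : nat :=
  count_box u k (fun x => A x /\ dist_le k u x).

(* Density D(A) = limsup_k |A ∩ N^k[u]| / |N^k[u]|, with u the origin
   (the value is independent of u). The ratio lies in [0,1], so the
   limsup is finite and [real] extracts it. *)
Definition density (A : V -> Prop) : R :=
  real (LimSup_seq (fun k =>
    INR (card_in_ball A (0%Z, 0%Z) k) / INR (card_in_ball (fun _ => True) (0%Z, 0%Z) k))).

(* N(v) ∩ N(w) has size n: neighbours of v lie in the radius-1 box around v. *)
Definition common_nbrs (v w : V) : nat :=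
  count_box v 1 (fun x => adj v x /\ adj w x).

Definition has_perfect_matching (S : V -> Prop) (M : V -> V -> Prop) : Prop :=
  (forall u v, M u v -> M v u) /\
  (forall u v, M u v -> S u /\ S v /\ adj u v) /\
  (forall v, S v -> exists w, M v w /\ forall w', M v w' -> w' = w).

Definition LPDS (S : V -> Prop) : Prop :=
  (forall v, S v \/ exists x, adj v x /\ S x) /\
  (exists M, has_perfect_matching S M) /\
  (forall u v, u <> v -> ~ S u -> ~ S v ->
     ~ (forall x, (adj u x /\ S x) <-> (adj v x /\ S x))).

Definition S_of (S : V -> Prop) (M : V -> V -> Prop) (n : nat) (v : V) : Prop :=
  S v /\ exists w, M v w /\ common_nbrs v w = n.

(* Discharging.  Every vertex [x] starts with charge 1 and splits it equally among the
   vertices of [S] in [N[x]] (there is one, by domination), so that [s] in [S] collects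
   [sh s = sum over x in N[s] of 1 / |N[x] ∩ S|].  For a matched pair [v ~ w] the matching
   and locating conditions force [sh v + sh w <= 28/3] when [v], [w] are diagonal
   neighbours (two common neighbours, [S_1]) and [<= 9] when they are orthogonal (four
   common neighbours, [S_2]); this local fact is checked by an exhaustive branch-and-bound
   search on the window of side at most 6 around the pair, in exact arithmetic with all
   shares scaled by [2520 = lcm(1,...,9)].  Sharing each pair's total equally between its
   two vertices and counting charges in the boxes [B_k] of radius [k] gives
   [(2k+1)^2 <= 14/3 |S_1 ∩ B_(k+2)| + 9/2 |S_2 ∩ B_(k+2)|], and the density bound
   follows in the limit. *)

From Stdlib Require Import Reals ZArith List Permutation Lia Lra Bool Classical ClassicalEpsilon.
From Coquelicot Require Import Coquelicot.
Import ListNotations.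

Section Geometry.
Local Open Scope Z_scope.

Definition origin : V := (0, 0).
Definition vadd (p e : V) : V := (fst p + fst e, snd p + snd e).
Definition vsub (x v : V) : V := (fst x - fst v, snd x - snd v).

Lemma vadd_origin p : vadd p origin = p.
Proof. destruct p; unfold vadd; simpl; f_equal; ring. Qed.

Lemma vadd_assoc a b c : vadd (vadd a b) c = vadd a (vadd b c).
Proof. destruct a, b, c; unfold vadd; simpl; f_equal; ring. Qed.

Lemma vadd_vsub v x : vadd v (vsub x v) = x.
Proof. destruct v, x; unfold vadd, vsub; simpl; f_equal; ring. Qed.

Lemma vadd_inj p a b : vadd p a = vadd p b -> a = b.
Proof. destruct p, a, b; unfold vadd; simpl; intros H; inversion H; f_equal; lia. Qed.

Definition V_eq_dec (p q : V) : {p = q} + {p <> q}.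
Proof. decide equality; apply Z.eq_dec. Defined.

Definition V_eqb (p q : V) : bool := Z.eqb (fst p) (fst q) && Z.eqb (snd p) (snd q).

Lemma V_eqb_eq p q : V_eqb p q = true <-> p = q.
Proof.
  destruct p, q; unfold V_eqb; simpl. rewrite andb_true_iff, !Z.eqb_eq.
  split; [intros [-> ->] | intros E; inversion E]; auto.
Qed.

Lemma V_eqb_neq p q : V_eqb p q = false <-> p <> q.
Proof. rewrite <- V_eqb_eq. destruct (V_eqb p q); intuition congruence. Qed.

Definition adjb (p q : V) : bool :=
  negb (V_eqb p q) &&
  Z.leb ((fst p - fst q) * (fst p - fst q) + (snd p - snd q) * (snd p - snd q)) 2.

Lemma adjb_adj p q : adjb p q = true <-> adj p q.
Proof. unfold adjb, adj. rewrite andb_true_iff, negb_true_iff, V_eqb_neq, Z.leb_le. tauto. Qed.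

Lemma adj_close p q :
  adj p q <-> p <> q /\ Z.abs (fst q - fst p) <= 1 /\ Z.abs (snd q - snd p) <= 1.
Proof.
  unfold adj. destruct p as [p1 p2], q as [q1 q2]; simpl.
  split; intros [Hne H]; split; auto; nia.
Qed.

Lemma adj_sym p q : adj p q -> adj q p.
Proof. rewrite !adj_close. intros [Hne H]. split; [congruence | lia]. Qed.

Lemma adjb_sym p q : adjb p q = adjb q p.
Proof. apply eq_true_iff_eq. rewrite !adjb_adj. split; apply adj_sym. Qed.

Lemma adj_transl v a b : adj (vadd v a) (vadd v b) <-> adj a b.
Proof.
  rewrite !adj_close. destruct v, a, b; unfold vadd; simpl.
  split; intros [Hne H]; split; try lia; intros E; apply Hne; inversion E; f_equal; lia.
Qed.

Lemma adjb_transl v a b : adjb (vadd v a) (vadd v b) = adjb a b.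
Proof. apply eq_true_iff_eq. rewrite !adjb_adj. apply adj_transl. Qed.

Definition interval (a : Z) (r : nat) : list Z :=
  map (fun i => a - Z.of_nat r + Z.of_nat i) (seq 0 (2 * r + 1)).

Definition box (c : V) (r : nat) : list V := list_prod (interval (fst c) r) (interval (snd c) r).

Lemma in_interval a r z : In z (interval a r) <-> a - Z.of_nat r <= z <= a + Z.of_nat r.
Proof.
  unfold interval. rewrite in_map_iff. split.
  - intros [i [<- Hi]]. apply in_seq in Hi. lia.
  - intros H. exists (Z.to_nat (z - a + Z.of_nat r)). rewrite in_seq. lia.
Qed.

Lemma interval_nodup a r : NoDup (interval a r).
Proof.
  apply NoDup_map_NoDup_ForallPairs; [|apply seq_NoDup].
  intros x y _ _ H. lia.
Qed.

Lemma in_box c r p : In p (box c r) <->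
  Z.abs (fst p - fst c) <= Z.of_nat r /\ Z.abs (snd p - snd c) <= Z.of_nat r.
Proof.
  destruct p as [x y]. unfold box.
  rewrite (in_prod_iff (interval (fst c) r) (interval (snd c) r) x y), !in_interval. simpl. lia.
Qed.

Lemma box_nodup c r : NoDup (box c r).
Proof.
  unfold box. rewrite list_prod_as_flat_map.
  generalize (interval_nodup (fst c) r), (interval_nodup (snd c) r).
  generalize (interval (snd c) r) as ys, (interval (fst c) r) as xs.
  intros ys xs Hx Hy. induction Hx as [|x xs Hx Hxs IH]; simpl; [constructor|].
  apply NoDup_app; auto.
  - apply NoDup_map_NoDup_ForallPairs; auto. intros a b _ _ H; now inversion H.
  - intros p Hp1 Hp2. apply in_map_iff in Hp1 as [y [<- _]].
    apply in_flat_map in Hp2 as [x' [Hx' Hp]]. apply in_map_iff in Hp as [y' [E _]].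
    inversion E; subst. contradiction.
Qed.

Lemma box_length c r : length (box c r) = ((2 * r + 1) * (2 * r + 1))%nat.
Proof.
  unfold box. etransitivity; [apply length_prod|].
  unfold interval. now rewrite !length_map, length_seq.
Qed.

Definition nbhd (p : V) : list V := map (vadd p) (box origin 1).
Definition nbrs (p : V) : list V := filter (adjb p) (nbhd p).

Lemma in_nbhd x y : In y (nbhd x) <-> Z.abs (fst y - fst x) <= 1 /\ Z.abs (snd y - snd x) <= 1.
Proof.
  unfold nbhd. rewrite in_map_iff. split.
  - intros [e [<- He]]. apply in_box in He. destruct x, e; simpl in *. lia.
  - intros H. exists (vsub y x). rewrite vadd_vsub, in_box. split; [reflexivity|].
    destruct x, y; simpl in *. lia.
Qed.

Lemma nbhd_sym x y : In y (nbhd x) <-> In x (nbhd y).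
Proof. rewrite !in_nbhd. lia. Qed.

Lemma nbhd_self p : In p (nbhd p).
Proof. apply in_nbhd. lia. Qed.

Lemma nbhd_nodup p : NoDup (nbhd p).
Proof.
  apply NoDup_map_NoDup_ForallPairs; [|apply box_nodup].
  intros a b _ _; apply vadd_inj.
Qed.

Lemma nbhd_transl v x : nbhd (vadd v x) = map (vadd v) (nbhd x).
Proof. unfold nbhd. rewrite map_map. apply map_ext. intros; apply vadd_assoc. Qed.

Lemma adj_in_nbhd x y : adj x y -> In y (nbhd x).
Proof. rewrite adj_close, in_nbhd. lia. Qed.

Lemma in_nbrs x y : In y (nbrs x) <-> adj x y.
Proof.
  unfold nbrs. rewrite filter_In, adjb_adj.
  split; [tauto | intros H; split; auto using adj_in_nbhd].
Qed.

End Geometry.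

Section Counting.
Variable g : V -> bool.

Definition nbhd_count (x : V) : nat := length (filter g (nbhd x)).

Lemma nbhd_count_le_9 x : (nbhd_count x <= 9)%nat.
Proof.
  unfold nbhd_count. rewrite filter_length_le.
  unfold nbhd. now rewrite length_map, box_length.
Qed.

Lemma nbhd_count_ge x T : NoDup T -> (forall s, In s T -> In s (nbhd x) /\ g s = true) ->
  (length T <= nbhd_count x)%nat.
Proof. intros HT Hs. apply NoDup_incl_length; auto. intros s Hs'. apply filter_In; auto. Qed.

Lemma nbhd_count_ge_1 x s : In s (nbhd x) -> g s = true -> (1 <= nbhd_count x)%nat.
Proof.
  intros. apply (nbhd_count_ge x [s]); [repeat constructor; auto|].
  intros y [<-|[]]; auto.
Qed.

Lemma nbhd_count_ge_2 x s t : s <> t -> In s (nbhd x) -> In t (nbhd x) ->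
  g s = true -> g t = true -> (2 <= nbhd_count x)%nat.
Proof.
  intros. apply (nbhd_count_ge x [s; t]).
  - repeat constructor; simpl; intuition.
  - intros y [<-|[<-|[]]]; auto.
Qed.

Lemma trace_of_count x T : NoDup T -> (forall s, In s T -> adjb x s && g s = true) ->
  nbhd_count x = length T ->
  g x = false /\ forall z, adjb x z && g z = true <-> In z T.
Proof.
  intros HT HxT Hc.
  assert (HxT' : forall s, In s T -> In s (nbhd x) /\ g s = true).
  { intros s Hs. destruct (proj1 (andb_true_iff _ _) (HxT s Hs)) as [A G].
    split; auto. now apply adj_in_nbhd, adjb_adj. }
  split.
  - destruct (g x) eqn:Gx; auto. exfalso.
    assert (Hx : ~ In x T).
    { intros Hx. destruct (proj1 (andb_true_iff _ _) (HxT x Hx)) as [A _].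
      apply adjb_adj, adj_close in A. tauto. }
    enough (length (x :: T) <= nbhd_count x)%nat by (simpl in *; lia).
    apply nbhd_count_ge; [now constructor|].
    intros s [<-|Hs]; auto using nbhd_self.
  - intros z. split; [|auto]. intros Hz.
    destruct (in_dec V_eq_dec z T) as [|Hn]; auto. exfalso.
    enough (length (z :: T) <= nbhd_count x)%nat by (simpl in *; lia).
    apply andb_true_iff in Hz as [A G].
    apply nbhd_count_ge; [now constructor|].
    intros s [<-|Hs]; auto. split; auto. now apply adj_in_nbhd, adjb_adj.
Qed.

Definition locating : Prop :=
  forall a b, a <> b -> g a = false -> g b = false ->
  ~ (forall z, adjb a z && g z = true <-> adjb b z && g z = true).

Lemma locating_count_unique T x y : locating -> NoDup T ->
  (forall s, In s T -> adjb x s && g s = true) -> (forall s, In s T -> adjb y s && g s = true) ->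
  nbhd_count x = length T -> nbhd_count y = length T -> x = y.
Proof.
  intros HL HT Hx Hy Cx Cy. destruct (V_eq_dec x y) as [|Hne]; auto. exfalso.
  destruct (trace_of_count x T HT Hx Cx) as [gx Ex].
  destruct (trace_of_count y T HT Hy Cy) as [gy Ey].
  apply (HL x y Hne gx gy). intros z. now rewrite Ex, Ey.
Qed.

End Counting.

Lemma nbhd_count_transl g v x : nbhd_count (fun p => g (vadd v p)) x = nbhd_count g (vadd v x).
Proof.
  unfold nbhd_count. rewrite nbhd_transl.
  induction (nbhd x) as [|a l IH]; simpl; auto. destruct (g (vadd v a)); simpl; auto.
Qed.

Section Shares.
Local Open Scope Z_scope.

(* [2520 = lcm(1,...,9)]: [share c] is [2520 / c] exactly for every count [c <= 9],
   and [share 0 = 0] like the real inverse [/ 0]. *)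
Definition share (c : nat) : Z := 2520 / Z.of_nat c.

Lemma share_antitone a b : (1 <= a <= b)%nat -> share b <= share a.
Proof. intros H. apply Z.div_le_compat_l; lia. Qed.

Definition sumZ (L : list V) (f : V -> Z) : Z := fold_right (fun x acc => f x + acc) 0 L.

Lemma sumZ_app L L' f : sumZ (L ++ L') f = sumZ L f + sumZ L' f.
Proof. induction L; simpl; [auto | rewrite IHL; ring]. Qed.

Lemma sumZ_perm L L' f : Permutation L L' -> sumZ L f = sumZ L' f.
Proof. induction 1; simpl; lia. Qed.

Lemma sum_share_le (c lo : V -> nat) k L : (1 <= k)%nat ->
  (forall x, In x L -> (lo x <= c x)%nat /\ (k <= c x)%nat) ->
  sumZ L (fun x => share (c x)) <= sumZ L (fun x => share (Nat.max (lo x) k)).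
Proof.
  intros Hk H. induction L as [|a L IH]; simpl; [lia|].
  assert (share (c a) <= share (Nat.max (lo a) k)).
  { destruct (H a (or_introl eq_refl)). apply share_antitone; lia. }
  enough (sumZ L (fun x => share (c x)) <= sumZ L (fun x => share (Nat.max (lo x) k))) by lia.
  apply IH. intros; apply H; simpl; auto.
Qed.

(* The last summand pays for the at most one vertex of [L] whose count may be [k - 1]. *)
Definition share_bound (lo : V -> nat) (L : list V) (k : nat) : Z :=
  sumZ L (fun x => share (Nat.max (lo x) k)) +
  if existsb (fun x => lo x <? k)%nat L then share (k - 1) - share k else 0.

Lemma sum_share_le_bound (c lo : V -> nat) k L : (2 <= k)%nat -> NoDup L ->
  (forall x, In x L -> (lo x <= c x)%nat /\ (k - 1 <= c x)%nat) ->
  (forall x y, In x L -> In y L -> c x = (k - 1)%nat -> c y = (k - 1)%nat -> x = y) ->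
  sumZ L (fun x => share (c x)) <= share_bound lo L k.
Proof.
  unfold share_bound. intros Hk HN H Huniq. induction HN as [|a L Ha HN IH]; simpl; [lia|].
  assert (Hd : share k <= share (k - 1)) by (apply share_antitone; lia).
  destruct (H a (or_introl eq_refl)) as [Hla Hca].
  destruct (Nat.eq_dec (c a) (k - 1)) as [E|E].
  - assert (Hrest : sumZ L (fun x => share (c x)) <= sumZ L (fun x => share (Nat.max (lo x) k))).
    { apply sum_share_le; [lia|]. intros y Hy. destruct (H y (or_intror Hy)). split; auto.
      destruct (Nat.eq_dec (c y) (k - 1)) as [E'|]; [|lia].
      exfalso. assert (a = y) by (apply Huniq; simpl; auto). subst; contradiction. }
    replace (lo a <? k)%nat with true by (symmetry; apply Nat.ltb_lt; lia).
    rewrite E. replace (Nat.max (lo a) k) with k by lia. simpl. lia.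
  - assert (share (c a) <= share (Nat.max (lo a) k)) by (apply share_antitone; lia).
    assert (IH' := IH ltac:(intros; apply H; simpl; auto) ltac:(intros; apply Huniq; simpl; auto)).
    destruct (lo a <? k)%nat, (existsb (fun x => lo x <? k)%nat L); simpl; lia.
Qed.

End Shares.

Definition partial : Type := list (V * bool).

Definition lookup (acc : partial) (p : V) : option bool :=
  match find (fun e => V_eqb (fst e) p) acc with Some e => Some (snd e) | None => None end.

Definition agree (g : V -> bool) (acc : partial) : Prop :=
  forall p b, lookup acc p = Some b -> g p = b.

Lemma agree_nil g : agree g [].
Proof. discriminate. Qed.

Lemma agree_cons g acc c : agree g acc -> agree g ((c, g c) :: acc).
Proof.
  intros H p b. unfold lookup; simpl. destruct (V_eqb c p) eqn:E.
  - apply V_eqb_eq in E as <-. simpl. congruence.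
  - apply H.
Qed.

Definition known_true (acc : partial) (p : V) : bool :=
  match lookup acc p with Some true => true | _ => false end.
Definition known_false (acc : partial) (p : V) : bool :=
  match lookup acc p with Some false => true | _ => false end.
Definition decided (acc : partial) (p : V) : bool :=
  match lookup acc p with Some _ => true | None => false end.
Definition value_at (acc : partial) (p : V) : bool :=
  match lookup acc p with Some b => b | None => false end.

Lemma known_true_agree g acc p : agree g acc -> known_true acc p = true -> g p = true.
Proof.
  unfold known_true. intros H. destruct (lookup acc p) as [[|]|] eqn:E; try discriminate; auto.
Qed.

Lemma known_false_agree g acc p : agree g acc -> known_false acc p = true -> g p = false.
Proof.
  unfold known_false. intros H. destruct (lookup acc p) as [[|]|] eqn:E; try discriminate; auto.
Qed.

Lemma value_at_decided g acc p : agree g acc -> decided acc p = true -> value_at acc p = g p.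
Proof.
  unfold decided, value_at. intros H. destruct (lookup acc p) as [b|] eqn:E; [|discriminate].
  intros _. symmetry; auto.
Qed.

Lemma known_count_le g acc x : agree g acc ->
  (nbhd_count (known_true acc) x <= nbhd_count g x)%nat.
Proof.
  intros H. apply NoDup_incl_length; [apply NoDup_filter, nbhd_nodup|].
  intros p. rewrite !filter_In. intros [Hp Hk]. eauto using known_true_agree.
Qed.

Section ShareBounds.
Local Open Scope Z_scope.
Variable g : V -> bool.
Hypothesis Hloc : locating g.

Lemma sum_share_le_side acc s L : agree g acc -> g s = true -> NoDup L ->
  (forall x, In x L -> adjb x s = true) ->
  sumZ L (fun x => share (nbhd_count g x)) <= share_bound (nbhd_count (known_true acc)) L 2.
Proof.
  intros Ha Gs NL HL. apply sum_share_le_bound; [lia | exact NL | |].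
  - intros x Hx. split; [now apply known_count_le|].
    apply (nbhd_count_ge_1 g x s); auto. now apply adj_in_nbhd, adjb_adj, HL.
  - intros x y Hx Hy Cx Cy. apply (locating_count_unique g [s]); auto.
    + repeat constructor; auto.
    + intros s' [<-|[]]. now rewrite HL, Gs.
    + intros s' [<-|[]]. now rewrite HL, Gs.
Qed.

Lemma sum_share_le_common acc s t L : agree g acc -> s <> t -> g s = true -> g t = true ->
  NoDup L -> (forall x, In x L -> adjb x s && adjb x t = true) ->
  sumZ L (fun x => share (nbhd_count g x)) <= share_bound (nbhd_count (known_true acc)) L 3.
Proof.
  intros Ha Hst Gs Gt NL HL. apply sum_share_le_bound; [lia | exact NL | |].
  - intros x Hx. split; [now apply known_count_le|].
    destruct (andb_prop _ _ (HL x Hx)) as [Hs Ht].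
    apply (nbhd_count_ge_2 g x s t); auto; now apply adj_in_nbhd, adjb_adj.
  - intros x y Hx Hy Cx Cy. apply (locating_count_unique g [s; t]); auto.
    + repeat constructor; simpl; intuition.
    + intros s' [<-|[<-|[]]]; destruct (andb_prop _ _ (HL x Hx)); now rewrite andb_true_iff.
    + intros s' [<-|[<-|[]]]; destruct (andb_prop _ _ (HL y Hy)); now rewrite andb_true_iff.
Qed.

Lemma sum_share_le_pair acc s t : agree g acc -> adjb s t = true -> g s = true -> g t = true ->
  sumZ [s; t] (fun x => share (nbhd_count g x)) <=
  share_bound (nbhd_count (known_true acc)) [s; t] 2.
Proof.
  intros Ha Hst Gs Gt. apply adjb_adj in Hst as Hst'. apply adj_close in Hst' as [Hne _].
  assert (H2 : forall x, In x [s; t] -> (2 <= nbhd_count g x)%nat).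
  { intros x [<-|[<-|[]]]; apply (nbhd_count_ge_2 g _ s t); auto using nbhd_self.
    - now apply adj_in_nbhd, adjb_adj.
    - now apply adj_in_nbhd, adj_sym, adjb_adj. }
  apply sum_share_le_bound; [lia | repeat constructor; simpl; intuition | |].
  - intros x Hx. split; [now apply known_count_le|]. specialize (H2 x Hx). lia.
  - intros x y Hx _ Cx _. specialize (H2 x Hx). lia.
Qed.

End ShareBounds.

Fixpoint nodupb (l : list V) : bool :=
  match l with
  | [] => true
  | x :: l' => negb (existsb (V_eqb x) l') && nodupb l'
  end.

Lemma nodupb_NoDup l : nodupb l = true -> NoDup l.
Proof.
  induction l as [|x l IH]; simpl; [constructor|].
  rewrite andb_true_iff, negb_true_iff. intros [Hx Hl]. constructor; auto.
  intros Hin. enough (existsb (V_eqb x) l = true) by congruence.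
  apply existsb_exists. exists x. split; auto. now apply V_eqb_eq.
Qed.

Definition same_multiset (l l' : list V) : bool :=
  forallb (fun x => count_occ V_eq_dec l x =? count_occ V_eq_dec l' x)%nat (l ++ l').

Lemma same_multiset_perm l l' : same_multiset l l' = true -> Permutation l l'.
Proof.
  unfold same_multiset. rewrite forallb_forall. intros H.
  apply (Permutation_count_occ V_eq_dec). intros x.
  destruct (in_dec V_eq_dec x (l ++ l')) as [Hx|Hx].
  - now apply Nat.eqb_eq, H.
  - rewrite in_app_iff in Hx.
    rewrite (proj1 (count_occ_not_In _ l x)), (proj1 (count_occ_not_In _ l' x)); tauto.
Qed.

(* [Partnered x]: an [S]-vertex outside the matched pair has its mate among its other
   neighbours.  [Separated a b]: two distinct vertices outside [S] have distinct traces
   on [S], i.e. the locating condition. *)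
Inductive constraint : Type :=
  | Partnered (x : V)
  | Separated (a b : V).

(* Exhaustive search bounding [2520 * (sh origin + sh d)] for a matched pair [origin ~ d],
   where [sh s] is the sum of [1 / |N[x] ∩ S|] over [x] in [N[s]].  [shared] lists
   [N[origin] ∩ N[d]] minus the pair, [only_o] and [only_d] the rest of [N[origin]] and
   of [N[d]]. *)
Section Checker.
Local Open Scope Z_scope.
Variables (d : V) (shared only_o only_d : list V).

Definition in_pair (p : V) : bool := V_eqb p origin || V_eqb p d.

Lemma in_pair_false x : in_pair x = false <-> x <> origin /\ x <> d.
Proof. unfold in_pair. now rewrite orb_false_iff, !V_eqb_neq. Qed.

Definition layout_ok : bool :=
  same_multiset (nbhd origin ++ nbhd d)
    ([origin; d] ++ [origin; d] ++ shared ++ shared ++ only_o ++ only_d) &&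
  adjb origin d && nodupb shared && forallb (fun x => adjb x origin && adjb x d) shared &&
  nodupb only_o && forallb (fun x => adjb x origin) only_o &&
  nodupb only_d && forallb (fun x => adjb x d) only_d.

Definition pair_value (g : V -> bool) : Z :=
  2 * sumZ [origin; d] (fun x => share (nbhd_count g x)) +
  2 * sumZ shared (fun x => share (nbhd_count g x)) +
  sumZ only_o (fun x => share (nbhd_count g x)) + sumZ only_d (fun x => share (nbhd_count g x)).

Definition pair_bound (acc : partial) : Z :=
  let lo := nbhd_count (known_true acc) in
  2 * share_bound lo [origin; d] 2 + 2 * share_bound lo shared 3 +
  share_bound lo only_o 2 + share_bound lo only_d 2.

Definition consistent (acc : partial) (c : constraint) : bool :=
  match c with
  | Partnered x =>
      if known_true acc x && negb (in_pair x) && forallb (decided acc) (nbrs x)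
      then existsb (fun z => known_true acc z && negb (in_pair z)) (nbrs x)
      else true
  | Separated a b =>
      if negb (V_eqb a b) && known_false acc a && known_false acc b &&
         forallb (decided acc) (nbrs a ++ nbrs b)
      then existsb (fun z => xorb (adjb a z && value_at acc z) (adjb b z && value_at acc z))
             (nbrs a ++ nbrs b)
      else true
  end.

(* A
   branch violating a constraint describes no LPDS and is discarded; a branch is closed
   as soon as the optimistic bound [pair_bound] is at most [B]. *)
Fixpoint search (B : Z) (cells : list V) (sched : list (list constraint)) (acc : partial)
  {struct sched} : bool :=
  match sched with
  | [] => pair_bound acc <=? B
  | cs :: sched' =>
      if forallb (consistent acc) cs then
        if pair_bound acc <=? B then true else
        match cells with
        | [] => false
        | c :: cells' =>
            search B cells' sched' ((c, false) :: acc) && search B cells' sched' ((c, true) :: acc)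
        end
      else true
  end.

Definition start : partial := [(d, true); (origin, true)].

Definition others_paired (g : V -> bool) : Prop :=
  forall x, g x = true -> x <> origin -> x <> d ->
  exists z, adjb x z && g z = true /\ z <> origin /\ z <> d.

Section Soundness.
Variable g : V -> bool.
Hypothesis Hlayout : layout_ok = true.
Hypotheses (Horigin : g origin = true) (Hd : g d = true).
Hypothesis Hpaired : others_paired g.
Hypothesis Hloc : locating g.

Lemma pair_value_le_bound acc : agree g acc -> pair_value g <= pair_bound acc.
Proof.
  intros Ha. unfold layout_ok in Hlayout. rewrite !andb_true_iff, !forallb_forall in Hlayout.
  destruct Hlayout as [[[[[[[_ Hod] Nshared] Hshared] Nonly_o] Honly_o] Nonly_d] Honly_d].
  apply nodupb_NoDup in Nshared, Nonly_o, Nonly_d.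
  assert (Hne : origin <> d) by (apply adjb_adj, adj_close in Hod; tauto).
  pose proof (sum_share_le_pair g acc origin d Ha Hod Horigin Hd).
  pose proof (sum_share_le_common g Hloc acc origin d shared Ha Hne Horigin Hd Nshared Hshared).
  pose proof (sum_share_le_side g Hloc acc origin only_o Ha Horigin Nonly_o Honly_o).
  pose proof (sum_share_le_side g Hloc acc d only_d Ha Hd Nonly_d Honly_d).
  unfold pair_value, pair_bound. lia.
Qed.

Lemma pair_value_split : pair_value g =
  sumZ (nbhd origin) (fun x => share (nbhd_count g x)) +
  sumZ (nbhd d) (fun x => share (nbhd_count g x)).
Proof.
  unfold layout_ok in Hlayout. rewrite !andb_true_iff in Hlayout.
  destruct Hlayout as [[[[[[[Hperm _] _] _] _] _] _] _].
  rewrite <- sumZ_app, (sumZ_perm _ _ _ (same_multiset_perm _ _ Hperm)), !sumZ_app.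
  unfold pair_value. lia.
Qed.

Lemma consistent_sound acc c : agree g acc -> consistent acc c = true.
Proof.
  intros Ha. destruct c as [x|a b]; simpl.
  - destruct (known_true acc x && negb (in_pair x) && forallb (decided acc) (nbrs x)) eqn:E;
      [|reflexivity].
    rewrite !andb_true_iff, negb_true_iff, in_pair_false, forallb_forall in E.
    destruct E as [[Hx [Ho Hdx]] Hdec].
    destruct (Hpaired x (known_true_agree g acc x Ha Hx) Ho Hdx) as [z [Hz [Hzo Hzd]]].
    apply andb_true_iff in Hz as [Az Gz].
    assert (Hzn : In z (nbrs x)) by now apply in_nbrs, adjb_adj.
    apply existsb_exists. exists z. split; auto.
    rewrite <- (value_at_decided g acc z Ha (Hdec z Hzn)) in Gz.
    unfold known_true, value_at in *. destruct (lookup acc z) as [[|]|]; try discriminate.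
    simpl. now apply negb_true_iff, in_pair_false.
  - destruct (negb (V_eqb a b) && known_false acc a && known_false acc b &&
              forallb (decided acc) (nbrs a ++ nbrs b)) eqn:E; [|reflexivity].
    rewrite !andb_true_iff, negb_true_iff, V_eqb_neq, forallb_forall in E.
    destruct E as [[[Hab Fa] Fb] Hdec].
    destruct (existsb _ _) eqn:Ex; [reflexivity|]. exfalso.
    apply (Hloc a b Hab); eauto using known_false_agree.
    intros z. apply eq_iff_eq_true.
    destruct (in_dec V_eq_dec z (nbrs a ++ nbrs b)) as [Hz|Hz].
    + rewrite <- (value_at_decided g acc z Ha (Hdec z Hz)).
      apply Bool.xorb_eq. destruct (xorb _ _) eqn:X; [|reflexivity].
      rewrite (proj2 (existsb_exists _ _) (ex_intro _ z (conj Hz X))) in Ex. discriminate.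
    + rewrite in_app_iff, !in_nbrs, <- !adjb_adj in Hz.
      destruct (adjb a z), (adjb b z); simpl; tauto.
Qed.

Lemma search_sound B cells sched acc : agree g acc -> search B cells sched acc = true ->
  pair_value g <= B.
Proof.
  revert cells acc. induction sched as [|cs sched IH]; intros cells acc Ha Hs; simpl in Hs.
  - apply Z.leb_le in Hs. pose proof (pair_value_le_bound acc Ha). lia.
  - replace (forallb (consistent acc) cs) with true in Hs
      by (symmetry; apply forallb_forall; auto using consistent_sound).
    destruct (pair_bound acc <=? B) eqn:E.
    + apply Z.leb_le in E. pose proof (pair_value_le_bound acc Ha). lia.
    + destruct cells as [|c cells]; [discriminate|]. apply andb_true_iff in Hs as [H0 H1].
      destruct (g c) eqn:G;
        [apply (IH cells ((c, true) :: acc)) | apply (IH cells ((c, false) :: acc))];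
        auto; rewrite <- G; now apply agree_cons.
Qed.

Lemma pair_value_le B cells sched : search B cells sched start = true -> pair_value g <= B.
Proof.
  apply search_sound.
  replace start with [(d, g d); (origin, g origin)] by (unfold start; now rewrite Horigin, Hd).
  apply agree_cons, agree_cons, agree_nil.
Qed.

End Soundness.
End Checker.

Record certificate : Type := {
  cert_dir : V;
  cert_shared : list V;
  cert_only_o : list V;
  cert_only_d : list V;
  cert_bound : Z;
  cert_cells : list V;
  cert_sched : list (list constraint) }.

Definition cert_ok (c : certificate) : bool :=
  let '{| cert_dir := d; cert_shared := shared; cert_only_o := only_o; cert_only_d := only_d;
          cert_bound := B; cert_cells := cells; cert_sched := sched |} := c in
  layout_ok d shared only_o only_d && search d shared only_o only_d B cells sched (start d).

(* The bounds are [2520 * 9] for orthogonal pairs and [2520 * 28/3] for diagonal ones. *)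
Definition cert_east : certificate := {|
  cert_dir := (1, 0)%Z;
  cert_shared := [(0, -1); (0, 1); (1, -1); (1, 1)]%Z;
  cert_only_o := [(-1, -1); (-1, 0); (-1, 1)]%Z;
  cert_only_d := [(2, -1); (2, 0); (2, 1)]%Z;
  cert_bound := 22680%Z;
  cert_cells :=
    [(0, -1); (0, 1); (1, -1); (1, 1); (-1, 0); (2, 0); (-1, -1); (-1, 1); (2, -1); (2, 1);
     (0, -2); (0, 2); (1, -2); (1, 2); (-2, 0); (-1, -2); (-1, 2); (2, -2); (2, 2); (3, 0);
     (-2, -1); (-2, 1); (3, -1); (3, 1); (-2, -2); (-2, 2); (3, -2); (3, 2)]%Z;
  cert_sched :=
    [[]; []; []; []; []; []; []; []; []; []; []; []; []; []; []; [];
     [Partnered (0, -1)];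
     [Partnered (0, 1); Separated (0, -1) (0, 1)];
     [Partnered (1, -1); Separated (0, -1) (1, -1); Separated (0, 1) (1, -1)];
     [Partnered (1, 1); Separated (0, -1) (1, 1); Separated (0, 1) (1, 1);
      Separated (1, -1) (1, 1)];
     []; [];
     [Partnered (-1, 0); Separated (-1, 0) (0, -1); Separated (-1, 0) (0, 1);
      Separated (-1, 0) (1, -1); Separated (-1, 0) (1, 1)];
     [];
     [Partnered (2, 0); Separated (-1, 0) (2, 0); Separated (0, -1) (2, 0);
      Separated (0, 1) (2, 0); Separated (1, -1) (2, 0); Separated (1, 1) (2, 0)];
     [Partnered (-1, -1); Separated (-1, -1) (-1, 0); Separated (-1, -1) (0, -1);
      Separated (-1, -1) (0, 1); Separated (-1, -1) (1, -1); Separated (-1, -1) (1, 1);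
      Separated (-1, -1) (2, 0)];
     [Partnered (-1, 1); Separated (-1, -1) (-1, 1); Separated (-1, 0) (-1, 1);
      Separated (-1, 1) (0, -1); Separated (-1, 1) (0, 1); Separated (-1, 1) (1, -1);
      Separated (-1, 1) (1, 1); Separated (-1, 1) (2, 0)];
     [Partnered (2, -1); Separated (-1, -1) (2, -1); Separated (-1, 0) (2, -1);
      Separated (-1, 1) (2, -1); Separated (0, -1) (2, -1); Separated (0, 1) (2, -1);
      Separated (1, -1) (2, -1); Separated (1, 1) (2, -1); Separated (2, -1) (2, 0)];
     [Partnered (2, 1); Separated (-1, -1) (2, 1); Separated (-1, 0) (2, 1);
      Separated (-1, 1) (2, 1); Separated (0, -1) (2, 1); Separated (0, 1) (2, 1);
      Separated (1, -1) (2, 1); Separated (1, 1) (2, 1); Separated (2, -1) (2, 1);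
      Separated (2, 0) (2, 1)]]%Z |}.

Definition cert_north : certificate := {|
  cert_dir := (0, 1)%Z;
  cert_shared := [(-1, 0); (-1, 1); (1, 0); (1, 1)]%Z;
  cert_only_o := [(-1, -1); (0, -1); (1, -1)]%Z;
  cert_only_d := [(-1, 2); (0, 2); (1, 2)]%Z;
  cert_bound := 22680%Z;
  cert_cells :=
    [(-1, 0); (-1, 1); (1, 0); (1, 1); (0, -1); (0, 2); (-1, -1); (-1, 2); (1, -1); (1, 2);
     (-2, 0); (-2, 1); (2, 0); (2, 1); (-2, -1); (-2, 2); (0, -2); (0, 3); (2, -1); (2, 2);
     (-1, -2); (-1, 3); (1, -2); (1, 3); (-2, -2); (-2, 3); (2, -2); (2, 3)]%Z;
  cert_sched :=
    [[]; []; []; []; []; []; []; []; []; []; []; []; []; []; [];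
     [Partnered (-1, 0)];
     [Partnered (-1, 1); Separated (-1, 0) (-1, 1)];
     []; [];
     [Partnered (1, 0); Separated (-1, 0) (1, 0); Separated (-1, 1) (1, 0)];
     [Partnered (1, 1); Separated (-1, 0) (1, 1); Separated (-1, 1) (1, 1);
      Separated (1, 0) (1, 1)];
     []; [];
     [Partnered (0, -1); Separated (-1, 0) (0, -1); Separated (-1, 1) (0, -1);
      Separated (0, -1) (1, 0); Separated (0, -1) (1, 1)];
     [Partnered (0, 2); Separated (-1, 0) (0, 2); Separated (-1, 1) (0, 2);
      Separated (0, -1) (0, 2); Separated (0, 2) (1, 0); Separated (0, 2) (1, 1)];
     [Partnered (-1, -1); Separated (-1, -1) (-1, 0); Separated (-1, -1) (-1, 1);
      Separated (-1, -1) (0, -1); Separated (-1, -1) (0, 2); Separated (-1, -1) (1, 0);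
      Separated (-1, -1) (1, 1)];
     [Partnered (-1, 2); Separated (-1, -1) (-1, 2); Separated (-1, 0) (-1, 2);
      Separated (-1, 1) (-1, 2); Separated (-1, 2) (0, -1); Separated (-1, 2) (0, 2);
      Separated (-1, 2) (1, 0); Separated (-1, 2) (1, 1)];
     [Partnered (1, -1); Separated (-1, -1) (1, -1); Separated (-1, 0) (1, -1);
      Separated (-1, 1) (1, -1); Separated (-1, 2) (1, -1); Separated (0, -1) (1, -1);
      Separated (0, 2) (1, -1); Separated (1, -1) (1, 0); Separated (1, -1) (1, 1)];
     [Partnered (1, 2); Separated (-1, -1) (1, 2); Separated (-1, 0) (1, 2);
      Separated (-1, 1) (1, 2); Separated (-1, 2) (1, 2); Separated (0, -1) (1, 2);
      Separated (0, 2) (1, 2); Separated (1, -1) (1, 2); Separated (1, 0) (1, 2);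
      Separated (1, 1) (1, 2)]]%Z |}.

Definition cert_northeast : certificate := {|
  cert_dir := (1, 1)%Z;
  cert_shared := [(0, 1); (1, 0)]%Z;
  cert_only_o := [(-1, -1); (-1, 0); (-1, 1); (0, -1); (1, -1)]%Z;
  cert_only_d := [(0, 2); (1, 2); (2, 0); (2, 1); (2, 2)]%Z;
  cert_bound := 23520%Z;
  cert_cells :=
    [(0, 1); (1, 0); (-1, 0); (-1, 1); (0, -1); (0, 2); (1, -1); (1, 2); (2, 0); (2, 1);
     (-1, -1); (-1, 2); (2, -1); (2, 2); (-2, 0); (-2, 1); (0, -2); (0, 3); (1, -2); (1, 3);
     (3, 0); (3, 1); (-2, -1); (-2, 2); (-1, -2); (-1, 3); (2, -2); (2, 3); (3, -1); (3, 2);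
     (-2, -2); (3, 3)]%Z;
  cert_sched :=
    [[]; []; []; []; []; []; []; []; []; []; []; [];
     [Partnered (0, 1)];
     [Partnered (1, 0); Separated (0, 1) (1, 0)];
     []; []; []; []; []; []; []; []; [];
     [Partnered (-1, 0); Separated (-1, 0) (0, 1); Separated (-1, 0) (1, 0)];
     [Partnered (-1, 1); Separated (-1, 0) (-1, 1); Separated (-1, 1) (0, 1);
      Separated (-1, 1) (1, 0)];
     [Partnered (0, -1); Separated (-1, 0) (0, -1); Separated (-1, 1) (0, -1);
      Separated (0, -1) (0, 1); Separated (0, -1) (1, 0)];
     [Partnered (0, 2); Separated (-1, 0) (0, 2); Separated (-1, 1) (0, 2);
      Separated (0, -1) (0, 2); Separated (0, 1) (0, 2); Separated (0, 2) (1, 0)];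
     [Partnered (1, -1); Separated (-1, 0) (1, -1); Separated (-1, 1) (1, -1);
      Separated (0, -1) (1, -1); Separated (0, 1) (1, -1); Separated (0, 2) (1, -1);
      Separated (1, -1) (1, 0)];
     [Partnered (1, 2); Separated (-1, 0) (1, 2); Separated (-1, 1) (1, 2);
      Separated (0, -1) (1, 2); Separated (0, 1) (1, 2); Separated (0, 2) (1, 2);
      Separated (1, -1) (1, 2); Separated (1, 0) (1, 2)];
     [Partnered (2, 0); Separated (-1, 0) (2, 0); Separated (-1, 1) (2, 0);
      Separated (0, -1) (2, 0); Separated (0, 1) (2, 0); Separated (0, 2) (2, 0);
      Separated (1, -1) (2, 0); Separated (1, 0) (2, 0); Separated (1, 2) (2, 0)];
     [Partnered (2, 1); Separated (-1, 0) (2, 1); Separated (-1, 1) (2, 1);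
      Separated (0, -1) (2, 1); Separated (0, 1) (2, 1); Separated (0, 2) (2, 1);
      Separated (1, -1) (2, 1); Separated (1, 0) (2, 1); Separated (1, 2) (2, 1);
      Separated (2, 0) (2, 1)];
     [Partnered (-1, -1); Separated (-1, -1) (-1, 0); Separated (-1, -1) (-1, 1);
      Separated (-1, -1) (0, -1); Separated (-1, -1) (0, 1); Separated (-1, -1) (0, 2);
      Separated (-1, -1) (1, -1); Separated (-1, -1) (1, 0); Separated (-1, -1) (1, 2);
      Separated (-1, -1) (2, 0); Separated (-1, -1) (2, 1)];
     [Partnered (2, 2); Separated (-1, -1) (2, 2); Separated (-1, 0) (2, 2);
      Separated (-1, 1) (2, 2); Separated (0, -1) (2, 2); Separated (0, 1) (2, 2);
      Separated (0, 2) (2, 2); Separated (1, -1) (2, 2); Separated (1, 0) (2, 2);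
      Separated (1, 2) (2, 2); Separated (2, 0) (2, 2); Separated (2, 1) (2, 2)]]%Z |}.

Definition cert_southeast : certificate := {|
  cert_dir := (1, -1)%Z;
  cert_shared := [(0, -1); (1, 0)]%Z;
  cert_only_o := [(-1, -1); (-1, 0); (-1, 1); (0, 1); (1, 1)]%Z;
  cert_only_d := [(0, -2); (1, -2); (2, -2); (2, -1); (2, 0)]%Z;
  cert_bound := 23520%Z;
  cert_cells :=
    [(0, -1); (1, 0); (-1, -1); (-1, 0); (0, -2); (0, 1); (1, -2); (1, 1); (2, -1); (2, 0);
     (-1, -2); (-1, 1); (2, -2); (2, 1); (-2, -1); (-2, 0); (0, -3); (0, 2); (1, -3); (1, 2);
     (3, -1); (3, 0); (-2, -2); (-2, 1); (-1, -3); (-1, 2); (2, -3); (2, 2); (3, -2); (3, 1);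
     (-2, 2); (3, -3)]%Z;
  cert_sched :=
    [[]; []; []; []; []; []; []; []; []; []; [];
     [Partnered (0, -1)];
     []; [];
     [Partnered (1, 0); Separated (0, -1) (1, 0)];
     []; []; []; []; []; []; []; [];
     [Partnered (-1, -1); Separated (-1, -1) (0, -1); Separated (-1, -1) (1, 0)];
     [Partnered (-1, 0); Separated (-1, -1) (-1, 0); Separated (-1, 0) (0, -1);
      Separated (-1, 0) (1, 0)];
     [Partnered (0, -2); Separated (-1, -1) (0, -2); Separated (-1, 0) (0, -2);
      Separated (0, -2) (0, -1); Separated (0, -2) (1, 0)];
     [Partnered (0, 1); Separated (-1, -1) (0, 1); Separated (-1, 0) (0, 1);
      Separated (0, -2) (0, 1); Separated (0, -1) (0, 1); Separated (0, 1) (1, 0)];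
     [Partnered (1, -2); Separated (-1, -1) (1, -2); Separated (-1, 0) (1, -2);
      Separated (0, -2) (1, -2); Separated (0, -1) (1, -2); Separated (0, 1) (1, -2);
      Separated (1, -2) (1, 0)];
     [Partnered (1, 1); Separated (-1, -1) (1, 1); Separated (-1, 0) (1, 1);
      Separated (0, -2) (1, 1); Separated (0, -1) (1, 1); Separated (0, 1) (1, 1);
      Separated (1, -2) (1, 1); Separated (1, 0) (1, 1)];
     [Partnered (2, -1); Separated (-1, -1) (2, -1); Separated (-1, 0) (2, -1);
      Separated (0, -2) (2, -1); Separated (0, -1) (2, -1); Separated (0, 1) (2, -1);
      Separated (1, -2) (2, -1); Separated (1, 0) (2, -1); Separated (1, 1) (2, -1)];
     [Partnered (2, 0); Separated (-1, -1) (2, 0); Separated (-1, 0) (2, 0);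
      Separated (0, -2) (2, 0); Separated (0, -1) (2, 0); Separated (0, 1) (2, 0);
      Separated (1, -2) (2, 0); Separated (1, 0) (2, 0); Separated (1, 1) (2, 0);
      Separated (2, -1) (2, 0)];
     [Partnered (-1, 1); Separated (-1, -1) (-1, 1); Separated (-1, 0) (-1, 1);
      Separated (-1, 1) (0, -2); Separated (-1, 1) (0, -1); Separated (-1, 1) (0, 1);
      Separated (-1, 1) (1, -2); Separated (-1, 1) (1, 0); Separated (-1, 1) (1, 1);
      Separated (-1, 1) (2, -1); Separated (-1, 1) (2, 0)];
     [Partnered (2, -2); Separated (-1, -1) (2, -2); Separated (-1, 0) (2, -2);
      Separated (-1, 1) (2, -2); Separated (0, -2) (2, -2); Separated (0, -1) (2, -2);
      Separated (0, 1) (2, -2); Separated (1, -2) (2, -2); Separated (1, 0) (2, -2);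
      Separated (1, 1) (2, -2); Separated (2, -2) (2, -1); Separated (2, -2) (2, 0)]]%Z |}.

Lemma cert_east_ok : cert_ok cert_east = true.
Proof. vm_compute. reflexivity. Qed.

Lemma cert_north_ok : cert_ok cert_north = true.
Proof. vm_compute. reflexivity. Qed.

Lemma cert_northeast_ok : cert_ok cert_northeast = true.
Proof. vm_compute. reflexivity. Qed.

Lemma cert_southeast_ok : cert_ok cert_southeast = true.
Proof. vm_compute. reflexivity. Qed.

Section RealSums.
Local Open Scope R_scope.

Definition sumR {A : Type} (l : list A) (f : A -> R) : R := fold_right (fun x acc => f x + acc) 0 l.

Lemma sumR_cons {A} (a : A) l f : sumR (a :: l) f = f a + sumR l f.
Proof. reflexivity. Qed.

Lemma sumR_ext {A} l (f h : A -> R) : (forall x, In x l -> f x = h x) -> sumR l f = sumR l h.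
Proof. induction l; simpl; intros H; auto. rewrite H, IHl; auto. Qed.

Lemma sumR_map {A B} (h : A -> B) l f : sumR (map h l) f = sumR l (fun x => f (h x)).
Proof. induction l; simpl; auto. now rewrite IHl. Qed.

Lemma sumR_plus {A} l (f h : A -> R) : sumR l (fun x => f x + h x) = sumR l f + sumR l h.
Proof. induction l; simpl; [lra|]. rewrite IHl; lra. Qed.

Lemma sumR_scal {A} l (f : A -> R) c : sumR l (fun x => c * f x) = c * sumR l f.
Proof. induction l; simpl; [lra|]. rewrite IHl; lra. Qed.

Lemma sumR_le {A} l (f h : A -> R) : (forall x, In x l -> f x <= h x) -> sumR l f <= sumR l h.
Proof.
  induction l; simpl; intros H; [lra|].
  assert (f a <= h a) by auto. assert (sumR l f <= sumR l h) by auto. lra.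
Qed.

Lemma sumR_nonneg {A} l (f : A -> R) : (forall x, In x l -> 0 <= f x) -> 0 <= sumR l f.
Proof.
  intros H. apply Rle_trans with (sumR l (fun _ => 0)); [|now apply sumR_le].
  clear H. induction l; simpl; lra.
Qed.

Lemma sumR_zero {A} (l : list A) : sumR l (fun _ => 0) = 0.
Proof. induction l; simpl; lra. Qed.

Lemma sumR_swap {A B} (l1 : list A) (l2 : list B) f :
  sumR l1 (fun x => sumR l2 (fun y => f x y)) = sumR l2 (fun y => sumR l1 (fun x => f x y)).
Proof.
  induction l1; simpl.
  - now rewrite sumR_zero.
  - now rewrite IHl1, <- sumR_plus.
Qed.

Lemma sumR_const_1 {A} (l : list A) : sumR l (fun _ => 1) = INR (length l).
Proof.
  induction l as [|a l IH]; [reflexivity|].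
  change (1 + sumR l (fun _ => 1) = INR (S (length l))). rewrite IH, S_INR. lra.
Qed.

Lemma sumR_INR {A} (l : list A) (f : A -> nat) :
  sumR l (fun x => INR (f x)) = INR (list_sum (map f l)).
Proof. induction l; simpl; auto. now rewrite IHl, plus_INR. Qed.

Lemma sumR_b2n {A} (l : list A) (f : A -> bool) :
  sumR l (fun x => INR (Nat.b2n (f x))) = INR (length (filter f l)).
Proof.
  induction l as [|a l IH]; [reflexivity|].
  change (INR (Nat.b2n (f a)) + sumR l (fun x => INR (Nat.b2n (f x))) =
          INR (length (filter f (a :: l)))).
  rewrite IH. cbn [filter]. destruct (f a); cbn [Nat.b2n length]; rewrite ?S_INR, ?INR_0; lra.
Qed.

Definition dlt (y v : V) : R := if V_eq_dec y v then 1 else 0.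
Definition din (y : V) (l : list V) : R := if in_dec V_eq_dec y l then 1 else 0.

Lemma dlt_sym y v : dlt y v = dlt v y.
Proof. unfold dlt. destruct (V_eq_dec y v), (V_eq_dec v y); congruence. Qed.

Lemma sumR_dlt l y f : NoDup l -> sumR l (fun v => dlt y v * f v) = din y l * f y.
Proof.
  unfold din. induction 1 as [|a l Ha _ IH].
  { destruct (in_dec V_eq_dec y []) as [[]|]; simpl; lra. }
  rewrite sumR_cons, IH. unfold dlt.
  destruct (in_dec V_eq_dec y (a :: l)) as [[->|Hin]|Hn].
  - destruct (V_eq_dec y y) as [_|]; [|congruence].
    destruct (in_dec V_eq_dec y l); [contradiction | lra].
  - destruct (V_eq_dec y a) as [->|_]; [contradiction|].
    destruct (in_dec V_eq_dec y l); [lra | contradiction].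
  - destruct (V_eq_dec y a) as [->|_]; [exfalso; apply Hn; now left|].
    destruct (in_dec V_eq_dec y l); [exfalso; apply Hn; now right | lra].
Qed.

Lemma sumR_din_le L1 L2 (f : V -> R) : NoDup L1 -> NoDup L2 -> (forall x, 0 <= f x) ->
  sumR L1 (fun x => din x L2 * f x) <= sumR L2 f.
Proof.
  intros N1 N2 Hf.
  rewrite (sumR_ext _ _ (fun x => sumR L2 (fun z => dlt x z * f z)))
    by (intros; now rewrite sumR_dlt).
  rewrite sumR_swap. apply sumR_le. intros z _.
  rewrite (sumR_ext _ _ (fun x => dlt z x * f z)) by (intros; now rewrite dlt_sym).
  rewrite sumR_dlt by auto. unfold din. destruct (in_dec V_eq_dec z L1); specialize (Hf z); lra.
Qed.

Lemma INR_ind (P : Prop) : INR (ind P) = if excluded_middle_informative P then 1 else 0.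
Proof. unfold ind. now destruct (excluded_middle_informative P). Qed.

Lemma INR_ind_bounds (P : Prop) : 0 <= INR (ind P) <= 1.
Proof. rewrite INR_ind. destruct (excluded_middle_informative P); lra. Qed.

Lemma inv_share c : (c <= 9)%nat -> / INR c = IZR (share c) / 2520.
Proof.
  intros Hc. unfold share.
  assert (E : c = 0%nat \/ c = 1%nat \/ c = 2%nat \/ c = 3%nat \/ c = 4%nat \/ c = 5%nat \/
              c = 6%nat \/ c = 7%nat \/ c = 8%nat \/ c = 9%nat) by lia.
  repeat destruct E as [-> | E]; subst; simpl;
    match goal with |- context [IZR (?a / ?b)%Z] =>
      let v := eval vm_compute in (a / b)%Z in change (a / b)%Z with v end;
    rewrite ?Rinv_0; field.
Qed.

Lemma sumR_inv_share l (c : V -> nat) : (forall x, c x <= 9)%nat ->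
  sumR l (fun x => / INR (c x)) = IZR (sumZ l (fun x => share (c x))) / 2520.
Proof.
  intros Hc. induction l as [|a l IH]; simpl; [field|].
  rewrite IH, plus_IZR, inv_share by auto. field.
Qed.

End RealSums.

Definition charb (S : V -> Prop) (p : V) : bool :=
  if excluded_middle_informative (S p) then true else false.

Lemma charb_true S p : charb S p = true <-> S p.
Proof. unfold charb. destruct (excluded_middle_informative (S p)); split; congruence || tauto. Qed.

Lemma charb_false S p : charb S p = false <-> ~ S p.
Proof. unfold charb. destruct (excluded_middle_informative (S p)); split; congruence || tauto. Qed.

Lemma ind_iff (P Q : Prop) : (P <-> Q) -> ind P = ind Q.
Proof.
  intros H. unfold ind.
  destruct (excluded_middle_informative P), (excluded_middle_informative Q); tauto.
Qed.

Lemma ind_charb S p : ind (S p) = Nat.b2n (charb S p).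
Proof. unfold ind, charb. now destruct (excluded_middle_informative (S p)). Qed.

Lemma ind_bool (b : bool) : ind (b = true) = Nat.b2n b.
Proof. unfold ind. destruct (excluded_middle_informative (b = true)), b; auto; congruence. Qed.

Section BoxCounts.
Local Open Scope Z_scope.

Lemma list_sum_map_prod {A B : Type} (f : A * B -> nat) xs ys :
  list_sum (map f (list_prod xs ys)) =
  list_sum (map (fun x => list_sum (map (fun y => f (x, y)) ys)) xs).
Proof. induction xs; simpl; auto. now rewrite map_app, list_sum_app, IHxs, map_map. Qed.

Lemma count_box_list c r P : count_box c r P = list_sum (map (fun p => ind (P p)) (box c r)).
Proof.
  unfold box, V. rewrite list_sum_map_prod. unfold interval. rewrite map_map.
  apply (f_equal list_sum), map_ext. intros i. now rewrite map_map.
Qed.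

Lemma count_box_transl c r (P : V -> Prop) :
  count_box c r P = count_box origin r (fun p => P (vadd c p)).
Proof.
  unfold count_box. f_equal. apply map_ext. intros i. f_equal. apply map_ext. intros j.
  apply ind_iff. match goal with |- P ?a <-> P ?b => replace b with a; [tauto|] end.
  unfold vadd, origin; simpl; f_equal; ring.
Qed.

Lemma common_nbrs_transl v e : common_nbrs v (vadd v e) =
  list_sum (map (fun p => Nat.b2n (adjb origin p && adjb e p)) (box origin 1)).
Proof.
  unfold common_nbrs. rewrite count_box_transl, count_box_list.
  f_equal. apply map_ext. intros p. rewrite <- ind_bool. apply ind_iff.
  rewrite andb_true_iff, !adjb_adj, <- (adj_transl v origin), vadd_origin, <- (adj_transl v e p).
  tauto.
Qed.

End BoxCounts.

Section Discharging.
Local Open Scope R_scope.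
Variables (S : V -> Prop) (M : V -> V -> Prop).
Hypothesis HS : LPDS S.
Hypothesis HM : has_perfect_matching S M.

Lemma mate_sym a b : M a b -> M b a.
Proof. apply HM. Qed.

Lemma mate_adj a b : M a b -> S a /\ S b /\ adj a b.
Proof. apply HM. Qed.

Lemma mate_unique a b c : M a b -> M a c -> b = c.
Proof.
  intros Hab Hac. destruct HM as [_ [_ Hex]].
  destruct (Hex a (proj1 (mate_adj a b Hab))) as [w [_ Hw]].
  now rewrite (Hw b Hab), (Hw c Hac).
Qed.

Lemma mate_exists v : S v -> exists w, M v w.
Proof. intros Sv. destruct HM as [_ [_ Hex]]. destruct (Hex v Sv) as [w [Hw _]]. eauto. Qed.

Definition load (x : V) : R := INR (nbhd_count (charb S) x).
Definition received (s : V) : R := sumR (nbhd s) (fun x => / load x).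

Lemma load_ge_1 x : 1 <= load x.
Proof.
  unfold load. rewrite <- INR_1. apply le_INR. destruct HS as [Hdom _].
  destruct (Hdom x) as [Sx|[y [Axy Sy]]].
  - apply (nbhd_count_ge_1 _ x x); [apply nbhd_self | now apply charb_true].
  - apply (nbhd_count_ge_1 _ x y); [now apply adj_in_nbhd | now apply charb_true].
Qed.

Lemma load_sum x : load x = sumR (nbhd x) (fun y => INR (ind (S y))).
Proof.
  unfold load, nbhd_count. rewrite <- sumR_b2n.
  apply sumR_ext. intros. now rewrite ind_charb.
Qed.

Lemma received_transl v x : received (vadd v x) =
  IZR (sumZ (nbhd x) (fun y => share (nbhd_count (fun p => charb S (vadd v p)) y))) / 2520.
Proof.
  unfold received, load. rewrite nbhd_transl, sumR_map.
  rewrite <- sumR_inv_share by (intros; apply nbhd_count_le_9).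
  apply sumR_ext. intros y _. now rewrite nbhd_count_transl.
Qed.

Lemma locating_transl v : locating (fun p => charb S (vadd v p)).
Proof.
  intros a b Hab Ga Gb Heq. destruct HS as [_ [_ Hloc]].
  apply (Hloc (vadd v a) (vadd v b)).
  - intros E. apply Hab. eapply vadd_inj; eauto.
  - now apply charb_false.
  - now apply charb_false.
  - intros x. specialize (Heq (vsub x v)).
    rewrite <- (adjb_transl v a), <- (adjb_transl v b), vadd_vsub in Heq.
    now rewrite <- !adjb_adj, <- !charb_true, <- !andb_true_iff.
Qed.

Lemma others_paired_transl v d : M v (vadd v d) -> others_paired d (fun p => charb S (vadd v p)).
Proof.
  intros Hvd x Gx Hxo Hxd. apply charb_true in Gx.
  destruct (mate_exists _ Gx) as [y Hxy]. destruct (mate_adj _ _ Hxy) as [_ [Sy Axy]].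
  exists (vsub y v). rewrite vadd_vsub. split; [|split].
  - rewrite andb_true_iff, <- (adjb_transl v), vadd_vsub, adjb_adj, charb_true. auto.
  - intros E. apply Hxd. assert (y = v) as ->.
    { rewrite <- (vadd_vsub v y), E. apply vadd_origin. }
    apply (vadd_inj v). apply (mate_unique v); auto using mate_sym.
  - intros E. apply Hxo. assert (y = vadd v d) as ->.
    { rewrite <- (vadd_vsub v y), E. reflexivity. }
    apply (vadd_inj v). rewrite vadd_origin. apply (mate_unique (vadd v d)); auto using mate_sym.
Qed.

Lemma received_pair_le c v : cert_ok c = true -> M v (vadd v (cert_dir c)) ->
  received v + received (vadd v (cert_dir c)) <= IZR (cert_bound c) / 2520.
Proof.
  destruct c as [d shared only_o only_d B cells sched]; simpl.
  unfold cert_ok. rewrite andb_true_iff. intros [Hlay Hsearch] Hvd.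
  set (g := fun p => charb S (vadd v p)).
  destruct (mate_adj _ _ Hvd) as [Sv [Sw _]].
  assert (Go : g origin = true) by (unfold g; rewrite vadd_origin; now apply charb_true).
  assert (Gd : g d = true) by now apply charb_true.
  pose proof (pair_value_le d shared only_o only_d g Hlay Go Gd (others_paired_transl v d Hvd)
                (locating_transl v) B cells sched Hsearch) as Hval.
  rewrite (pair_value_split d shared only_o only_d g Hlay) in Hval. apply IZR_le in Hval.
  replace (received v) with (received (vadd v origin)) by now rewrite vadd_origin.
  rewrite !received_transl. rewrite plus_IZR in Hval. fold g. lra.
Qed.

Lemma received_pair_le_sym c v e : cert_ok c = true ->
  e = cert_dir c \/ vadd e (cert_dir c) = origin -> M v (vadd v e) ->
  received v + received (vadd v e) <= IZR (cert_bound c) / 2520.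
Proof.
  intros Hc [->|He] Hve; [now apply received_pair_le|].
  assert (Hw : vadd (vadd v e) (cert_dir c) = v) by now rewrite vadd_assoc, He, vadd_origin.
  pose proof (received_pair_le c (vadd v e) Hc) as H. rewrite Hw in H.
  specialize (H (mate_sym _ _ Hve)). lra.
Qed.

Lemma received_pair_orthogonal v e : In e [(1, 0); (-1, 0); (0, 1); (0, -1)]%Z ->
  M v (vadd v e) -> received v + received (vadd v e) <= 9.
Proof.
  intros He Hve. destruct He as [<-|[<-|[<-|[<-|[]]]]].
  - pose proof (received_pair_le_sym cert_east v (1, 0)%Z cert_east_ok
      (or_introl eq_refl) Hve).
    simpl in *. lra.
  - pose proof (received_pair_le_sym cert_east v (-1, 0)%Z cert_east_ok
      (or_intror eq_refl) Hve).
    simpl in *. lra.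
  - pose proof (received_pair_le_sym cert_north v (0, 1)%Z cert_north_ok
      (or_introl eq_refl) Hve).
    simpl in *. lra.
  - pose proof (received_pair_le_sym cert_north v (0, -1)%Z cert_north_ok
      (or_intror eq_refl) Hve).
    simpl in *. lra.
Qed.

Lemma received_pair_diagonal v e : In e [(1, 1); (-1, -1); (1, -1); (-1, 1)]%Z ->
  M v (vadd v e) -> received v + received (vadd v e) <= 28 / 3.
Proof.
  intros He Hve. destruct He as [<-|[<-|[<-|[<-|[]]]]].
  - pose proof (received_pair_le_sym cert_northeast v (1, 1)%Z cert_northeast_ok
      (or_introl eq_refl) Hve).
    simpl in *. lra.
  - pose proof (received_pair_le_sym cert_northeast v (-1, -1)%Z cert_northeast_ok
      (or_intror eq_refl) Hve).
    simpl in *. lra.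
  - pose proof (received_pair_le_sym cert_southeast v (1, -1)%Z cert_southeast_ok
      (or_introl eq_refl) Hve).
    simpl in *. lra.
  - pose proof (received_pair_le_sym cert_southeast v (-1, 1)%Z cert_southeast_ok
      (or_intror eq_refl) Hve).
    simpl in *. lra.
Qed.

Lemma received_pair_bound v w : M v w ->
  (common_nbrs v w = 2%nat /\ received v + received w <= 28 / 3) \/
  (common_nbrs v w = 4%nat /\ received v + received w <= 9).
Proof.
  intros Hvw. destruct (mate_adj _ _ Hvw) as [_ [_ Avw]].
  rewrite <- (vadd_vsub v w) in *. set (e := vsub w v) in *. clearbody e.
  assert (He : In e (nbrs origin)).
  { apply in_nbrs, (adj_transl v). now rewrite vadd_origin. }
  vm_compute in He. rewrite common_nbrs_transl.
  destruct He as [<-|[<-|[<-|[<-|[<-|[<-|[<-|[<-|[]]]]]]]]];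
    first [ left; split; [reflexivity | apply received_pair_diagonal; simpl; tauto]
          | right; split; [reflexivity | apply received_pair_orthogonal; simpl; tauto] ].
Qed.

End Discharging.

Section Averaging.
Local Open Scope R_scope.
Variables (S : V -> Prop) (M : V -> V -> Prop).
Hypothesis HS : LPDS S.
Hypothesis HM : has_perfect_matching S M.

(* [x] sends [1 / (2 |N[x] ∩ S|)] to each [S]-vertex [y] of [N[x]] and as much to the
   mate of [y]. *)
Definition transfer (x v : V) : R :=
  / (2 * load S x) * sumR (nbhd x) (fun y => INR (ind (S y)) * (dlt y v + INR (ind (M y v)))).

Lemma ind_mate y w : M y w -> forall v, INR (ind (M y v)) = dlt w v.
Proof.
  intros Hyw v. rewrite INR_ind. unfold dlt.
  destruct (excluded_middle_informative (M y v)) as [Hyv|Hyv], (V_eq_dec w v) as [<-|Hne];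
    auto; exfalso.
  - apply Hne. now apply (mate_unique S M HM y).
  - now apply Hyv.
Qed.

Lemma ind_mate_rev v w : M v w -> forall y, INR (ind (M y v)) = dlt w y.
Proof.
  intros Hvw y. rewrite <- (ind_mate v w Hvw y). f_equal. apply ind_iff.
  split; apply (mate_sym S M HM).
Qed.

Lemma sumR_box_dlt y k : In y (box origin k) -> sumR (box origin k) (dlt y) = 1.
Proof.
  intros Hy. rewrite (sumR_ext _ _ (fun v => dlt y v * 1)) by (intros; lra).
  rewrite sumR_dlt by apply box_nodup. unfold din.
  destruct (in_dec V_eq_dec y (box origin k)); [lra | contradiction].
Qed.

Lemma transfer_total x k : In x (box origin k) -> sumR (box origin (k + 2)) (transfer x) = 1.
Proof.
  intros Hx. unfold transfer. rewrite sumR_scal, sumR_swap.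
  assert (Hbox : forall y, (Z.abs (fst y) <= Z.of_nat k + 2)%Z ->
            (Z.abs (snd y) <= Z.of_nat k + 2)%Z ->
            In y (box origin (k + 2))).
  { intros y H1 H2. apply in_box. simpl. lia. }
  apply in_box in Hx. simpl in Hx.
  rewrite (sumR_ext _ _ (fun y => 2 * INR (ind (S y)))).
  - rewrite sumR_scal, <- (load_sum S). pose proof (load_ge_1 S HS x). field. lra.
  - intros y Hy. apply in_nbhd in Hy. rewrite sumR_scal, sumR_plus.
    destruct (classic (S y)) as [Sy|Sy].
    + destruct (mate_exists S M HM y Sy) as [w Hyw].
      destruct (mate_adj S M HM y w Hyw) as [_ [_ Ayw]]. apply adj_close in Ayw.
      rewrite (sumR_ext _ (fun v => INR (ind (M y v))) (dlt w)) by (intros; now apply ind_mate).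
      rewrite !sumR_box_dlt by (apply Hbox; lia). lra.
    + rewrite INR_ind. destruct (excluded_middle_informative (S y)); [contradiction | lra].
Qed.

Lemma transfer_to_mated x v w : M v w ->
  transfer x v = din v (nbhd x) / (2 * load S x) + din w (nbhd x) / (2 * load S x).
Proof.
  intros Hvw. destruct (mate_adj S M HM v w Hvw) as [Sv [Sw _]]. unfold transfer.
  rewrite (sumR_ext _ _ (fun y => dlt v y * 1 + dlt w y * 1)).
  - rewrite sumR_plus, !sumR_dlt by apply nbhd_nodup. field.
    pose proof (load_ge_1 S HS x). lra.
  - intros y _. rewrite (ind_mate_rev v w Hvw y), (dlt_sym y v), INR_ind. unfold dlt.
    destruct (excluded_middle_informative (S y)) as [Sy|Sy]; [lra|].
    destruct (V_eq_dec v y) as [<-|]; [contradiction|].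
    destruct (V_eq_dec w y) as [<-|]; [contradiction | lra].
Qed.

Lemma transfer_to_unmatched x v : ~ S v -> transfer x v = 0.
Proof.
  intros Sv. unfold transfer. rewrite (sumR_ext _ _ (fun _ => 0)), sumR_zero; [lra|].
  intros y _. rewrite !INR_ind. unfold dlt.
  destruct (excluded_middle_informative (S y)) as [Sy|]; [|lra].
  destruct (V_eq_dec y v) as [<-|]; [contradiction|].
  destruct (excluded_middle_informative (M y v)) as [Myv|]; [|lra].
  exfalso. now apply Sv, (mate_adj S M HM y v).
Qed.

Lemma sumR_din_nbhd_le u k :
  sumR (box origin k) (fun x => din u (nbhd x) / (2 * load S x)) <= received S u / 2.
Proof.
  assert (Hpos : forall x, 0 < 2 * load S x) by (intros x; pose proof (load_ge_1 S HS x); lra).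
  rewrite (sumR_ext _ _ (fun x => din x (nbhd u) * / (2 * load S x))).
  - eapply Rle_trans.
    + apply sumR_din_le; [apply box_nodup | apply nbhd_nodup |].
      intros x. now apply Rlt_le, Rinv_0_lt_compat.
    + unfold received. rewrite (sumR_ext _ _ (fun x => / 2 * / load S x)), sumR_scal; [lra|].
      intros x _. rewrite Rinv_mult. reflexivity.
  - intros x _. unfold din, Rdiv. pose proof (nbhd_sym u x).
    destruct (in_dec V_eq_dec u (nbhd x)), (in_dec V_eq_dec x (nbhd u)); tauto || reflexivity.
Qed.

Lemma S_of_mate v w n : M v w -> S_of S M n v <-> common_nbrs v w = n.
Proof.
  intros Hvw. unfold S_of. split.
  - intros [_ [w' [Hvw' E]]]. now rewrite (mate_unique S M HM v w w' Hvw Hvw').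
  - intros E. split; [apply (mate_adj S M HM v w Hvw) | eauto].
Qed.

Lemma transfer_received_le v k :
  sumR (box origin k) (fun x => transfer x v) <=
  14 / 3 * INR (ind (S_of S M 2 v)) + 9 / 2 * INR (ind (S_of S M 4 v)).
Proof.
  destruct (classic (S v)) as [Sv|Sv].
  - destruct (mate_exists S M HM v Sv) as [w Hvw].
    rewrite (sumR_ext _ _ _ (fun x _ => transfer_to_mated x v w Hvw)), sumR_plus.
    pose proof (sumR_din_nbhd_le v k). pose proof (sumR_din_nbhd_le w k).
    rewrite !INR_ind.
    destruct (received_pair_bound S M HS HM v w Hvw) as [[E B]|[E B]];
      destruct (excluded_middle_informative (S_of S M 2 v)) as [H2|H2],
               (excluded_middle_informative (S_of S M 4 v)) as [H4|H4];
      rewrite !(S_of_mate v w _ Hvw), E in *; try congruence; lra.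
  - rewrite (sumR_ext _ _ (fun _ => 0)), sumR_zero.
    + pose proof (INR_ind_bounds (S_of S M 2 v)). pose proof (INR_ind_bounds (S_of S M 4 v)). lra.
    + intros x _. now apply transfer_to_unmatched.
Qed.

Lemma box_le_weighted_count k :
  INR (length (box origin k)) <=
  14 / 3 * sumR (box origin (k + 2)) (fun v => INR (ind (S_of S M 2 v))) +
  9 / 2 * sumR (box origin (k + 2)) (fun v => INR (ind (S_of S M 4 v))).
Proof.
  rewrite <- sumR_const_1.
  rewrite (sumR_ext _ _ (fun x => sumR (box origin (k + 2)) (transfer x)))
    by (intros x Hx; symmetry; now apply transfer_total).
  rewrite sumR_swap, <- !sumR_scal, <- sumR_plus.
  apply sumR_le. intros v _. apply transfer_received_le.
Qed.

End Averaging.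

Section Density.
Local Open Scope R_scope.

Definition ratio (A : V -> Prop) (k : nat) : R :=
  INR (card_in_ball A origin k) / INR (card_in_ball (fun _ => True) origin k).

Lemma dist_le_box k p : (Z.abs (fst p) <= Z.of_nat k)%Z -> (Z.abs (snd p) <= Z.of_nat k)%Z ->
  dist_le k origin p.
Proof.
  revert p. induction k as [|k IH]; intros [p1 p2] H1 H2; simpl in *.
  - unfold origin. f_equal; lia.
  - destruct (classic (Z.abs p1 <= Z.of_nat k /\ Z.abs p2 <= Z.of_nat k)%Z) as [[A1 A2]|A].
    + left. now apply IH.
    + right. exists (p1 - Z.sgn p1, p2 - Z.sgn p2)%Z. split.
      * apply IH; simpl; lia.
      * apply adj_close. simpl. split; [intros E; inversion E; lia | lia].
Qed.

Lemma card_in_ball_sum A k :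
  INR (card_in_ball A origin k) = sumR (box origin k) (fun p => INR (ind (A p))).
Proof.
  unfold card_in_ball. rewrite count_box_list, <- sumR_INR. apply sumR_ext.
  intros p Hp. apply in_box in Hp. simpl in Hp. f_equal. apply ind_iff.
  split; [tauto|]. intros HA. split; auto. apply dist_le_box; lia.
Qed.

Lemma card_in_ball_all k :
  INR (card_in_ball (fun _ => True) origin k) = (2 * INR k + 1) * (2 * INR k + 1).
Proof.
  rewrite card_in_ball_sum, (sumR_ext _ _ (fun _ => 1)), sumR_const_1, box_length.
  - rewrite mult_INR, plus_INR, mult_INR. simpl. lra.
  - intros x _. rewrite INR_ind. destruct (excluded_middle_informative True); tauto.
Qed.

Lemma ratio_bounds A k : 0 <= ratio A k <= 1.
Proof.
  unfold ratio. rewrite card_in_ball_all, card_in_ball_sum.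
  assert (Hk : 0 < (2 * INR k + 1) * (2 * INR k + 1)) by (pose proof (pos_INR k); nra).
  assert (H : 0 <= sumR (box origin k) (fun p => INR (ind (A p))) <=
             (2 * INR k + 1) * (2 * INR k + 1)).
  { split.
    - apply sumR_nonneg. intros; apply INR_ind_bounds.
    - rewrite <- card_in_ball_all, card_in_ball_sum. apply sumR_le. intros x _.
      pose proof (INR_ind_bounds (A x)). rewrite (INR_ind True).
      destruct (excluded_middle_informative True); [lra | tauto]. }
  set (D := (2 * INR k + 1) * (2 * INR k + 1)) in *. destruct H as [H0 H1]. split.
  - unfold Rdiv. apply Rmult_le_pos; [lra | now apply Rlt_le, Rinv_0_lt_compat].
  - apply (Rmult_le_reg_r D); [lra|].
    unfold Rdiv. rewrite Rmult_assoc, Rinv_l, Rmult_1_r by lra. lra.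
Qed.

Lemma ratio_eventually_lt A eps : 0 < eps ->
  exists N, forall n, (N <= n)%nat -> ratio A n < density A + eps.
Proof.
  intros He. unfold density.
  change (fun k => INR (card_in_ball A (0%Z, 0%Z) k) /
                   INR (card_in_ball (fun _ => True) (0%Z, 0%Z) k))
    with (ratio A).
  unfold LimSup_seq. destruct (ex_LimSup_seq (ratio A)) as [l Hl]. simpl.
  destruct l as [l| |]; simpl in Hl.
  - destruct (Hl (mkposreal eps He)) as [_ [N HN]]. exists N. intros n Hn. now apply HN.
  - exfalso. destruct (Hl 2 0%nat) as [n [_ Hn]]. pose proof (ratio_bounds A n). lra.
  - exfalso. destruct (Hl 0) as [N HN]. specialize (HN N (le_n N)).
    pose proof (ratio_bounds A N). lra.
Qed.

Lemma ratio_combination_lower S M n : LPDS S -> has_perfect_matching S M -> (2 <= n)%nat ->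
  1 - 8 / (2 * INR n + 1) <= 14 / 3 * ratio (S_of S M 2) n + 9 / 2 * ratio (S_of S M 4) n.
Proof.
  intros HS HM Hn.
  pose proof (box_le_weighted_count S M HS HM (n - 2)) as H.
  replace (n - 2 + 2)%nat with n in H by lia.
  rewrite box_length, mult_INR, plus_INR, mult_INR, minus_INR in H by lia. simpl in H.
  unfold ratio. rewrite card_in_ball_all, !card_in_ball_sum.
  set (D := 2 * INR n + 1).
  assert (HD : 5 <= D) by (apply le_INR in Hn; simpl in Hn; unfold D; lra).
  set (s2 := sumR (box origin n) (fun p => INR (ind (S_of S M 2 p)))) in *.
  set (s4 := sumR (box origin n) (fun p => INR (ind (S_of S M 4 p)))) in *.
  replace (14 / 3 * (s2 / (D * D)) + 9 / 2 * (s4 / (D * D)))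
    with ((14 / 3 * s2 + 9 / 2 * s4) / (D * D))
    by (field; lra).
  apply Rle_trans with ((D - 4) * (D - 4) / (D * D)).
  - apply Rmult_le_reg_r with (D * D); [nra|].
    unfold Rdiv. rewrite Rmult_assoc, Rinv_l, Rmult_1_r by nra.
    replace ((1 - 8 * / D) * (D * D)) with (D * D - 8 * D) by (field; lra). nra.
  - apply Rmult_le_compat_r; [apply Rlt_le, Rinv_0_lt_compat; nra|].
    unfold D in *. lra.
Qed.

Lemma div_odd_eventually_lt c eps : 0 < eps ->
  exists N, forall n, (N <= n)%nat -> c / (2 * INR n + 1) < eps.
Proof.
  intros He. destruct (INR_unbounded (c / eps)) as [N HN]. exists N. intros n Hn.
  apply le_INR in Hn. pose proof (pos_INR n).
  apply Rmult_lt_reg_r with (2 * INR n + 1); [lra|].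
  unfold Rdiv. rewrite Rmult_assoc, Rinv_l, Rmult_1_r by lra.
  apply Rmult_lt_compat_r with (r := eps) in HN; [|lra].
  unfold Rdiv in HN. rewrite Rmult_assoc, Rinv_l, Rmult_1_r in HN by lra. nra.
Qed.

End Density.

Theorem theorem1 (S : V -> Prop) (M : V -> V -> Prop) :
  LPDS S -> has_perfect_matching S M ->
  14 / 3 * density (S_of S M 2) + 9 / 2 * density (S_of S M 4) >= 1.
Proof.
  intros HS HM. apply Rnot_lt_ge. intros Hlt.
  set (delta := 1 - (14 / 3 * density (S_of S M 2) + 9 / 2 * density (S_of S M 4))).
  assert (Hd : 0 < delta / 20) by (unfold delta; lra).
  destruct (ratio_eventually_lt (S_of S M 2) _ Hd) as [N2 HN2].
  destruct (ratio_eventually_lt (S_of S M 4) _ Hd) as [N4 HN4].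
  destruct (div_odd_eventually_lt 8 (delta / 2)) as [N HN]; [lra|].
  set (n := (N2 + N4 + N + 2)%nat).
  pose proof (ratio_combination_lower S M n HS HM ltac:(lia)).
  specialize (HN2 n ltac:(lia)). specialize (HN4 n ltac:(lia)). specialize (HN n ltac:(lia)).
  unfold delta in *. lra.
Qed.
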